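(* Let $H$ be a separable complex Hilbert space, $(\Omega,\mu)$ a measure space with positive measure, let $K\in B(H)$ have closed range, and let $F:\Omega\to H$ be a Parseval continuous $K$-frame of $H$ with a dual continuous $K$-Bessel sequence $G$. Then $G$ is the canonical dual continuous $K$-Bessel sequence $K^{\dagger}F$ of $F$ if and only if $T_G^{\ast}T_G=T_G^{\ast}T_{Q}$ for every dual continuous $K$-Bessel sequence $Q$ of $F$, where $T_G$ and $T_Q$ denote the analysis operators of $G$ and $Q$.
   Context: A map $F:\Omega\to H$ is weakly measurable if $\omega\mapsto\langle f,F(\omega)\rangle$ is measurable for every $f\in H$. A continuous Bessel sequence is a weakly measurable $G$ with $\int_\Omega|\langle f,G(\omega)\rangle|^2\,d\mu(\omega)\le B\|f\|^2$ for all $f\in H$, for some $B>0$; its analysis operator is $T_G:H\to L^2(\Omega,\mu)$, $T_Gf=\{\langle f,G(\omega)\rangle\}_{\omega}$. A Parseval continuous $K$-frame is a weakly measurable $F$ with $\int_\Omega|\langle f,F(\omega)\rangle|^2\,d\mu(\omega)=\|K^{\ast}f\|^2$ for all $f\in H$. A dual continuous $K$-Bessel sequence of $F$ is a continuous Bessel sequence $G$ with $Kf=\int_\Omega\langle f,G(\omega)\rangle F(\omega)\,d\mu(\omega)$ for all $f\in H$. $K^{\dagger}$ is the Moore–Penrose pseudo-inverse of $K$; the canonical dual continuous $K$-Bessel sequence of $F$ is $K^{\dagger}F$, which is a dual continuous $K$-Bessel sequence of $F$ whose analysis operator has minimal norm among all such duals. (The paper uses the letter $H$ both for the Hilbert space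 and for the arbitrary dual; here the arbitrary dual is called $Q$.) *)

From HB Require Import structures.
From mathcomp Require Import all_boot all_order all_algebra.
From mathcomp Require Import all_classical all_reals all_analysis.
From mathcomp Require Import complex.
Set Implicit Arguments. Unset Strict Implicit. Unset Printing Implicit Defensive.
Import Order.TTheory GRing.Theory Num.Theory.
Local Open Scope ring_scope.
Local Open Scope classical_set_scope.

Section Hilbert.
Variables (R : realType) (V : lmodType R[i]) (ip : V -> V -> R[i]).

Definition is_inner_product : Prop :=
  [/\ (forall (a : R[i]) (x y z : V), ip (a *: x + y) z = a * ip x z + ip y z),
      (forall x y, ip y x = conjc (ip x y)),
      (forall x, 0 <= ip x x) &
      (forall x, ip x x = 0 -> x = 0)].

Definition hnorm (x : V) : R := Num.sqrt (complex.Re (ip x x)).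

Definition hcomplete : Prop :=
  forall u : nat -> V,
    (forall e : R, 0 < e -> exists N, forall m n, (N <= m)%N -> (N <= n)%N ->
        hnorm (u m - u n) < e) ->
    exists l : V, forall e : R, 0 < e -> exists N, forall n, (N <= n)%N ->
        hnorm (u n - l) < e.

Definition is_hilbert : Prop := is_inner_product /\ hcomplete.

Definition hseparable : Prop :=
  exists D : nat -> V, forall (x : V) (e : R), 0 < e -> exists n, hnorm (x - D n) < e.

Definition bounded_op (K : V -> V) : Prop :=
  (forall (a : R[i]) x y, K (a *: x + y) = a *: K x + K y) /\
  exists M : R, forall x, hnorm (K x) <= M * hnorm x.

Definition closed_range (K : V -> V) : Prop :=
  forall (u : nat -> V) (l : V), (forall n, exists x, u n = K x) ->
    (forall e : R, 0 < e -> exists N, forall n, (N <= n)%N -> hnorm (u n - l) < e) ->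
    exists x, l = K x.

Definition is_adjoint (K Kadj : V -> V) : Prop :=
  bounded_op Kadj /\ forall x y, ip (K x) y = ip x (Kadj y).

Definition is_MP_inverse (K Kdag : V -> V) : Prop :=
  [/\ bounded_op Kdag,
      (forall x, K (Kdag (K x)) = K x),
      (forall x, Kdag (K (Kdag x)) = Kdag x),
      (forall x y, ip (K (Kdag x)) y = ip x (K (Kdag y))) &
      (forall x y, ip (Kdag (K x)) y = ip x (Kdag (K y)))].

Section Meas.
Variables (d : measure_display) (T : measurableType d)
          (mu : {measure set T -> \bar R}).

Definition cabs2 (z : R[i]) : R := complex.Re z ^+ 2 + complex.Im z ^+ 2.

Definition cint (g : T -> R[i]) : R[i] :=
  Complex (Rintegral mu setT (fun w => complex.Re (g w)))
          (Rintegral mu setT (fun w => complex.Im (g w))).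

Definition weakly_measurable (F : T -> V) : Prop :=
  forall f : V, measurable_fun setT (fun w => complex.Re (ip f (F w))) /\
                measurable_fun setT (fun w => complex.Im (ip f (F w))).

Definition cBessel (G : T -> V) : Prop :=
  weakly_measurable G /\
  exists B : R, 0 < B /\ forall f : V,
    (\int[mu]_w ((cabs2 (ip f (G w)))%:E) <= (B * hnorm f ^+ 2)%:E)%E.

Definition parseval_cKframe (Kadj : V -> V) (F : T -> V) : Prop :=
  weakly_measurable F /\
  forall f : V, (\int[mu]_w ((cabs2 (ip f (F w)))%:E) = (hnorm (Kadj f) ^+ 2)%:E)%E.

(* G is a dual continuous K-Bessel sequence of F:
   K f = \int <f,G w> F w dmu (weakly), i.e. <K f, h> = \int <f,G w><F w,h> dmu *)
Definition dual_cKBessel (K : V -> V) (F G : T -> V) : Prop :=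
  cBessel G /\
  forall f h : V, ip (K f) h = cint (fun w => ip f (G w) * ip (F w) h).

(* <T_A^* T_B f, g> = <T_B f, T_A g>_{L^2} = \int <f,B w> conj<g,A w> dmu *)
Definition TstarT_form (A B : T -> V) (f g : V) : R[i] :=
  cint (fun w => ip f (B w) * conjc (ip g (A w))).

End Meas.
End Hilbert.

(* Let A be a family equal a.e. to the canonical dual K^+ F and Q any dual of F.
   With (K^+)^* the adjoint of K^+, <T_A^* T_Q f, g> = \int <f, Q w> <F w, (K^+)^* g>
   = <K f, (K^+)^* g> = <K^+ K f, g>, independently of Q; this is the forward
   direction. Conversely, if T_G^* T_G = T_G^* T_Q for every dual Q, take
   Q = K^+ F: together with the identity above for A = K^+ F this makes
   \int |<f, G w - K^+ F w>|^2 vanish for every f, so G w - K^+ F w is a.e.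
   orthogonal to a countable dense set, i.e. G = K^+ F a.e.  The adjoint of K^+
   comes from the Riesz representation theorem, proved by projecting onto the
   closed kernel of a bounded functional; K^+ F being a dual is the polarized
   Parseval identity T_F^* T_F = K K^*. *)
From Pilot Require Import Defs.
From HB Require Import structures.
From mathcomp Require Import all_boot all_order all_algebra.
From mathcomp Require Import all_classical all_reals all_analysis.
From mathcomp Require Import complex.
From mathcomp Require Import ring lra measurable_realfun.
Set Implicit Arguments. Unset Strict Implicit. Unset Printing Implicit Defensive.
Import Order.TTheory GRing.Theory Num.Theory.
Local Open Scope ring_scope.
Local Open Scope classical_set_scope.
Local Open Scope complex_scope.

Section ComplexFacts.
Variable R : realType.
Implicit Types z w : R[i].

Lemma mulcJ z : z * conjc z = (cabs2 z)%:C.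
Proof.
by case: z => a b; apply/eqP; rewrite eq_complex /cabs2 /=; apply/andP; split; apply/eqP; ring.
Qed.

Lemma cabs2_ge0 z : 0 <= cabs2 z.
Proof. by rewrite addr_ge0 ?sqr_ge0. Qed.

Lemma cabs2_eq0 z : cabs2 z = 0 -> z = 0.
Proof.
case: z => a b /eqP; rewrite /cabs2 paddr_eq0 ?sqr_ge0 // !sqrf_eq0 /=.
by case/andP => /eqP-> /eqP->.
Qed.

Lemma Re_mulJ z w :
  complex.Re (z * conjc w) = complex.Re z * complex.Re w + complex.Im z * complex.Im w.
Proof. by case: z w => a b [c e] /=; ring. Qed.

Lemma Im_mulJ z w :
  complex.Im (z * conjc w) = complex.Im z * complex.Re w - complex.Re z * complex.Im w.
Proof. by case: z w => a b [c e] /=; ring. Qed.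

Lemma cabs2B_le z w : cabs2 (z - w) <= 2 * cabs2 z + 2 * cabs2 w.
Proof.
case: z w => a b [c e]; rewrite /cabs2 /=.
by have := sqr_ge0 (a + c); have := sqr_ge0 (b + e); nra.
Qed.

Lemma normr_Re_mulJ_le z w : `|complex.Re (z * conjc w)| <= cabs2 z + cabs2 w.
Proof.
rewrite Re_mulJ /cabs2; case: z w => a b [c e] /=.
have := sqr_ge0 (a - c); have := sqr_ge0 (a + c).
have := sqr_ge0 (b - e); have := sqr_ge0 (b + e).
by rewrite ler_norml => *; apply/andP; split; nra.
Qed.

Lemma normr_Im_mulJ_le z w : `|complex.Im (z * conjc w)| <= cabs2 z + cabs2 w.
Proof.
rewrite Im_mulJ /cabs2; case: z w => a b [c e] /=.
have := sqr_ge0 (b - c); have := sqr_ge0 (b + c).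
have := sqr_ge0 (a - e); have := sqr_ge0 (a + e).
by rewrite ler_norml => *; apply/andP; split; nra.
Qed.

End ComplexFacts.

Section InnerProduct.
Variables (R : realType) (V : lmodType R[i]) (ip : V -> V -> R[i]).
Hypothesis ipP : is_inner_product ip.
Local Notation hnorm := (hnorm ip).

Lemma ip_linear a x y z : ip (a *: x + y) z = a * ip x z + ip y z.
Proof. by case: ipP. Qed.

Lemma ip_sym x y : ip y x = conjc (ip x y).
Proof. by case: ipP. Qed.

Lemma ip0l z : ip 0 z = 0.
Proof.
by have := ip_linear 1 0 0 z; rewrite scaler0 addr0 mul1r -[LHS]addr0 => /addrI <-.
Qed.

Lemma ipDl x y z : ip (x + y) z = ip x z + ip y z.
Proof. by have := ip_linear 1 x y z; rewrite scale1r mul1r. Qed.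

Lemma ipZl a x z : ip (a *: x) z = a * ip x z.
Proof. by rewrite -[a *: x]addr0 ip_linear ip0l addr0. Qed.

Lemma ipNl x z : ip (- x) z = - ip x z.
Proof. by rewrite -scaleN1r ipZl mulN1r. Qed.

Lemma ipBl x y z : ip (x - y) z = ip x z - ip y z.
Proof. by rewrite ipDl ipNl. Qed.

Lemma ip0r z : ip z 0 = 0.
Proof. by rewrite ip_sym ip0l conjc0. Qed.

Lemma ipDr x y z : ip z (x + y) = ip z x + ip z y.
Proof. by rewrite !(ip_sym _ z) ipDl; exact: rmorphD. Qed.

Lemma ipZr a x z : ip z (a *: x) = conjc a * ip z x.
Proof. by rewrite !(ip_sym _ z) ipZl; exact: rmorphM. Qed.

Lemma ipNr x z : ip z (- x) = - ip z x.
Proof. by rewrite !(ip_sym _ z) ipNl; exact: rmorphN. Qed.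

Lemma ipBr x y z : ip z (x - y) = ip z x - ip z y.
Proof. by rewrite ipDr ipNr. Qed.

Definition hnorm2 x := complex.Re (ip x x).

Lemma ip_self x : ip x x = (hnorm2 x)%:C.
Proof.
case: ipP => _ _ /(_ x) + _; rewrite /hnorm2.
by case: (ip x x) => a b; rewrite lecE /= => /andP[/eqP-> _].
Qed.

Lemma hnorm2_ge0 x : 0 <= hnorm2 x.
Proof. by case: ipP => _ _ /(_ x) + _; rewrite lecE => /andP[]. Qed.

Lemma ip_self_eq0 x : ip x x = 0 -> x = 0.
Proof. by case: ipP => _ _ _; apply. Qed.

Lemma hnorm2_eq0 x : hnorm2 x = 0 -> x = 0.
Proof. by move=> h; apply: ip_self_eq0; rewrite ip_self h. Qed.

Lemma hnorm_ge0 x : 0 <= hnorm x.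
Proof. exact: sqrtr_ge0. Qed.

Lemma sqr_hnorm x : hnorm x ^+ 2 = hnorm2 x.
Proof. by rewrite sqr_sqrtr // hnorm2_ge0. Qed.

Lemma hnorm_le x y : (hnorm x <= hnorm y) = (hnorm2 x <= hnorm2 y).
Proof. exact/ler_sqrt/hnorm2_ge0. Qed.

Lemma hnorm_lt_sqr x e : 0 < e -> hnorm2 x < e ^+ 2 -> hnorm x < e.
Proof. by move=> e_gt0 lt_x; rewrite -[e]gtr0_norm // -sqrtr_sqr ltr_sqrt ?exprn_gt0. Qed.

Lemma hnorm2D x y : hnorm2 (x + y) = hnorm2 x + hnorm2 y + 2 * complex.Re (ip x y).
Proof.
rewrite /hnorm2 ipDl !ipDr (ip_sym x y).
by case: (ip x x) (ip y y) (ip x y) => ? ? [? ?] [? ?] /=; ring.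
Qed.

Lemma hnorm2N x : hnorm2 (- x) = hnorm2 x.
Proof. by rewrite /hnorm2 ipNl ipNr opprK. Qed.

Lemma hnorm2B x y : hnorm2 (x - y) = hnorm2 x + hnorm2 y - 2 * complex.Re (ip x y).
Proof. by rewrite hnorm2D hnorm2N ipNr raddfN /=; ring. Qed.

Lemma hnorm2Z a x : hnorm2 (a *: x) = cabs2 a * hnorm2 x.
Proof. by rewrite /hnorm2 ipZl ipZr mulrA mulcJ ip_self /=; ring. Qed.

Lemma parallelogram x y :
  hnorm2 (x + y) + hnorm2 (x - y) = 2 * hnorm2 x + 2 * hnorm2 y.
Proof. by rewrite hnorm2D hnorm2B; ring. Qed.

Lemma cauchy_schwarz x y : cabs2 (ip x y) <= hnorm2 x * hnorm2 y.
Proof.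
have [/hnorm2_eq0->|ny] := eqVneq (hnorm2 y) 0.
  by rewrite /hnorm2 !ip0r /cabs2 /= mulr0 expr0n addr0.
have ny_gt0 : 0 < hnorm2 y by rewrite lt_def ny hnorm2_ge0.
have expand : hnorm2 ((hnorm2 y)%:C *: x - ip x y *: y) =
    hnorm2 y * (hnorm2 y * hnorm2 x - cabs2 (ip x y)).
  rewrite hnorm2B !hnorm2Z ipZl ipZr.
  by move: (ip x y) => [a b]; rewrite /cabs2 /=; ring.
have := hnorm2_ge0 ((hnorm2 y)%:C *: x - ip x y *: y).
by rewrite expand pmulr_rge0 // subr_ge0 mulrC.
Qed.

Lemma hnormD x y : hnorm (x + y) <= hnorm x + hnorm y.
Proof.
have nx := hnorm_ge0 x; have ny := hnorm_ge0 y.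
have Re_le : complex.Re (ip x y) <= hnorm x * hnorm y.
  have := cauchy_schwarz x y; rewrite -!sqr_hnorm -exprMn /cabs2.
  have := mulr_ge0 nx ny.
  by case: (ip x y) => a b /=; move: (hnorm x * hnorm y) => p; nra.
rewrite -(ler_pXn2r (_ : (0 < 2)%N)) ?nnegrE ?addr_ge0 ?hnorm_ge0 //.
by rewrite sqr_hnorm hnorm2D -!sqr_hnorm; nra.
Qed.

Lemma bounded_op_hnorm2 A : bounded_op ip A ->
  exists2 M, 0 <= M & forall x, hnorm2 (A x) <= M * hnorm2 x.
Proof.
move=> [_ [M A_bounded]]; exists (M ^+ 2) => [|x]; first exact: sqr_ge0.
rewrite -!sqr_hnorm -exprMn.
by have := A_bounded x; have := hnorm_ge0 (A x); nra.
Qed.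

Lemma ipr_inj a b : (forall x, ip x a = ip x b) -> a = b.
Proof.
move=> eq_ab; apply/eqP; rewrite -subr_eq0; apply/eqP/hnorm2_eq0.
by rewrite /hnorm2 ipBr eq_ab subrr.
Qed.

Lemma orthogonal_dense_eq0 (D : nat -> V) v :
  (forall x e, 0 < e -> exists n, hnorm (x - D n) < e) ->
  (forall n, ip (D n) v = 0) -> v = 0.
Proof.
move=> denseD orth_v; apply/hnorm2_eq0/eqP; apply: contraT => nv.
have v_gt0 : 0 < hnorm2 v by rewrite lt_def nv hnorm2_ge0.
have nv_gt0 : 0 < hnorm v by rewrite sqrtr_gt0.
have [n lt_n] := denseD v (hnorm v) nv_gt0.
have : hnorm2 v <= hnorm2 (v - D n).
  have := cauchy_schwarz (v - D n) v.
  rewrite ipBl orth_v subr0 ip_self /cabs2 /= expr0n /= addr0 expr2.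
  by rewrite ler_pM2r.
by rewrite -hnorm_le leNgt lt_n.
Qed.

End InnerProduct.

Section Projection.
Variables (R : realType) (V : lmodType R[i]) (ip : V -> V -> R[i]).
Hypothesis ipP : is_inner_product ip.
Local Notation hnorm := (hnorm ip).
Local Notation hnorm2 := (hnorm2 ip).

Definition hcvg (u : nat -> V) (l : V) :=
  forall e : R, 0 < e -> exists N, forall n, (N <= n)%N -> hnorm (u n - l) < e.

Definition hcauchy (u : nat -> V) :=
  forall e : R, 0 < e -> exists N, forall m n, (N <= m)%N -> (N <= n)%N ->
    hnorm (u m - u n) < e.

Variable M : set V.
Hypothesis M0 : M 0.
Hypothesis M_lin : forall a x y, M x -> M y -> M (a *: x + y).

Lemma parallelogram_dist_le z del x y :
  (forall n, M n -> del <= hnorm (z - n)) -> 0 <= del -> M x -> M y ->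
  hnorm2 (x - y) <= 2 * hnorm2 (z - x) + 2 * hnorm2 (z - y) - 4 * del ^+ 2.
Proof.
move=> del_lb del_ge0 Mx My.
pose m := 2^-1 *: (x + y).
have Mm : M m.
  by rewrite /m scalerDr; apply: M_lin => //; rewrite -[_ *: y]addr0; apply: M_lin.
have del_m : del ^+ 2 <= hnorm2 (z - m).
  by rewrite -sqr_hnorm // lerXn2r ?nnegrE ?hnorm_ge0 ?del_lb.
have sum_m : z - x + (z - y) = 2 *: (z - m).
  rewrite /m scalerBr scalerA mulfV ?pnatr_eq0 // scale1r scaler_nat mulr2n.
  by rewrite opprD addrACA.
have diff_xy : z - x - (z - y) = - (x - y) by rewrite !opprB addrC addrA subrK.
have := parallelogram ipP (z - x) (z - y).
rewrite sum_m diff_xy hnorm2Z // hnorm2N //.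
by rewrite /cabs2 /=; lra.
Qed.

Lemma minimizing_cauchy z del u :
  (forall n, M n -> del <= hnorm (z - n)) -> 0 <= del -> (forall k, M (u k)) ->
  (forall k, hnorm (z - u k) < del + k.+1%:R^-1) -> hcauchy u.
Proof.
move=> del_lb del_ge0 Mu u_lt e e_gt0.
pose c := 4 * del + 2.
have c_gt0 : 0 < c by rewrite /c; lra.
have eps_gt0 : 0 < e ^+ 2 / (2 * c) by rewrite divr_gt0 ?exprn_gt0 ?mulr_gt0.
have [N _ small] := near_infty_natSinv_lt (PosNum eps_gt0).
have sq k : hnorm2 (z - u k) <= del ^+ 2 + (2 * del + 1) * k.+1%:R^-1.
  have := u_lt k; have := hnorm_ge0 ip (z - u k); rewrite -sqr_hnorm //.
  have : 0 < k.+1%:R^-1 :> R by rewrite invr_gt0.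
  have : k.+1%:R^-1 <= 1 :> R by rewrite invf_le1 ?ler1n.
  move: (k.+1%:R^-1) => ek; nra.
have small_c k : (N <= k)%N -> c * k.+1%:R^-1 < e ^+ 2 / 2.
  move=> /small /= lt_k; rewrite ltr_pdivlMr ?mulr_gt0 // in lt_k.
  by rewrite ltr_pdivlMr // mulrAC mulrC [c * 2]mulrC.
exists N => m n Nm Nn; apply: hnorm_lt_sqr => //.
have := parallelogram_dist_le del_lb del_ge0 (Mu m) (Mu n).
have := sq m; have := sq n; have := small_c m Nm; have := small_c n Nn.
rewrite /c; move: (m.+1%:R^-1) (n.+1%:R^-1) => em en; lra.
Qed.

Hypothesis ip_complete : hcomplete ip.
Hypothesis M_closed : forall u l, (forall n, M (u n)) -> hcvg u l -> M l.

Lemma nearest_point_exists z :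
  exists2 l, M l & forall n, M n -> hnorm (z - l) <= hnorm (z - n).
Proof.
pose S := [set hnorm (z - n) | n in M].
have S_lb : has_lbound S by exists 0 => _ [n _ <-]; exact: hnorm_ge0.
have S_inf : has_inf S by split => //; exists (hnorm (z - 0)), 0.
have del_lb n : M n -> inf S <= hnorm (z - n) by move=> Mn; apply: (ge_inf S_lb); exists n.
have del_ge0 : 0 <= inf S.
  by apply: lb_le_inf; [exists (hnorm (z - 0)), 0 | move=> _ [n _ <-]; exact: hnorm_ge0].
have approx k : exists n, M n /\ hnorm (z - n) < inf S + k.+1%:R^-1.
  have ek_gt0 : 0 < k.+1%:R^-1 :> R by rewrite invr_gt0.
  by have [_ [n Mn <-]] := inf_adherent ek_gt0 S_inf; exists n.
have [u /all_and2[Mu u_lt]] := choice approx.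
have [l u_l] := ip_complete (minimizing_cauchy del_lb del_ge0 Mu u_lt).
exists l; first exact: M_closed u_l.
move=> n Mn; apply: le_trans (del_lb n Mn).
apply/ler_addgt0Pr => e e_gt0.
have e2_gt0 : 0 < e / 2 by rewrite divr_gt0.
have [N1 near_l] := u_l _ e2_gt0.
have [N2 _ small] := near_infty_natSinv_lt (PosNum e2_gt0).
pose k := maxn N1 N2.
have tri : hnorm (z - l) <= hnorm (z - u k) + hnorm (u k - l).
  by have := hnormD ipP (z - u k) (u k - l); rewrite addrA subrK.
have := near_l k (leq_maxl _ _); have := small k (leq_maxr _ _); have := u_lt k.
by rewrite /=; move: (k.+1%:R^-1) => ek; lra.
Qed.

Lemma nearest_point_orth z l :
  M l -> (forall n, M n -> hnorm (z - l) <= hnorm (z - n)) ->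
  forall n, M n -> ip (z - l) n = 0.
Proof.
move=> Ml l_min n Mn.
(* Moving l by t along n would bring it closer to z unless <z - l, n> = 0;
   the step s keeps 2 - s |n|^2 positive. *)
pose w := z - l; pose s := (hnorm2 n + 1)^-1; pose t := s%:C * ip w n.
have n_ge0 := hnorm2_ge0 ipP n.
have s_gt0 : 0 < s by rewrite invr_gt0; lra.
have sn_lt1 : s * hnorm2 n < 1.
  by rewrite mulrC ltr_pdivrMr; lra.
have le_w : hnorm2 w <= hnorm2 (w - t *: n).
  rewrite -!hnorm_le // /w -addrA -opprD l_min //.
  by rewrite addrC; apply: M_lin.
have expand : hnorm2 (w - t *: n) =
    hnorm2 w - s * cabs2 (ip w n) * (2 - s * hnorm2 n).
  rewrite hnorm2B // hnorm2Z // ipZr // /t.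
  by move: (ip w n) => [a b]; rewrite /cabs2 /=; ring.
apply: cabs2_eq0; apply/eqP; rewrite eq_le cabs2_ge0 andbT.
have := cabs2_ge0 (ip w n); rewrite expand in le_w.
have : 0 < s * (2 - s * hnorm2 n) by rewrite mulr_gt0 //; lra.
nra.
Qed.

End Projection.

Section Riesz.
Variables (R : realType) (V : lmodType R[i]) (ip : V -> V -> R[i]).
Hypotheses (ipP : is_inner_product ip) (ip_complete : hcomplete ip).
Local Notation hnorm2 := (hnorm2 ip).
Variables (phi : V -> R[i]) (C : R).
Hypothesis phi_linear : forall a x y, phi (a *: x + y) = a * phi x + phi y.
Hypothesis phi_bounded : forall x, cabs2 (phi x) <= C * hnorm2 x.

Let phi0 : phi 0 = 0.
Proof. by have := phi_linear 1 0 0; rewrite scaler0 addr0 mul1r -[LHS]addr0 => /addrI <-. Qed.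

Let phiD x y : phi (x + y) = phi x + phi y.
Proof. by have := phi_linear 1 x y; rewrite scale1r mul1r. Qed.

Let phiZ a x : phi (a *: x) = a * phi x.
Proof. by rewrite -[a *: x]addr0 phi_linear phi0 addr0. Qed.

Let phiB x y : phi (x - y) = phi x - phi y.
Proof. by rewrite -scaleN1r phiD phiZ mulN1r. Qed.

Lemma bounded_kernel_closed u l :
  (forall n, phi (u n) = 0) -> hcvg ip u l -> phi l = 0.
Proof.
move=> phi_u u_l; apply/cabs2_eq0/eqP; apply: contraT => phi_l.
have p_gt0 : 0 < cabs2 (phi l) by rewrite lt_def phi_l cabs2_ge0.
pose t := cabs2 (phi l) / (`|C| + 1).
have t_gt0 : 0 < t by rewrite divr_gt0 // ltr_wpDl.
have st_gt0 : 0 < Num.sqrt t by rewrite sqrtr_gt0.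
have [N near_l] := u_l _ st_gt0.
have small : hnorm2 (u N - l) * (`|C| + 1) < cabs2 (phi l).
  by rewrite -ltr_pdivlMr ?ltr_wpDl // -ltr_sqrt //; exact: near_l.
have le_C : C * hnorm2 (u N - l) <= `|C| * hnorm2 (u N - l).
  by apply: ler_wpM2r; [exact: hnorm2_ge0 | exact: ler_norm].
have := phi_bounded (l - u N); rewrite phiB phi_u subr0 -hnorm2N // opprB.
have := hnorm2_ge0 ipP (u N - l); nra.
Qed.

Lemma riesz_representation : exists h, forall x, phi x = ip x h.
Proof.
have [[z phi_z]|phi_eq0] := pselect (exists z, phi z != 0); last first.
  exists 0 => x; rewrite ip0r //; apply/eqP; apply: contraT => phi_x.
  by case: phi_eq0; exists x.
pose M := [set x | phi x = 0].
have M_lin a x y : M x -> M y -> M (a *: x + y).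
  by rewrite /M /= phi_linear => -> ->; rewrite mulr0 addr0.
have [l Ml l_min] :=
  nearest_point_exists (M := M) ipP phi0 M_lin ip_complete bounded_kernel_closed z.
pose w := z - l.
have orth n : phi n = 0 -> ip n w = 0.
  by move=> phi_n; rewrite ip_sym // (nearest_point_orth ipP M_lin Ml l_min) ?conjc0.
have phi_w : phi w != 0 by rewrite phiB Ml subr0.
have ww_ne0 : ip w w != 0.
  by apply: contra phi_w => /eqP/(ip_self_eq0 ipP)->; rewrite phi0.
exists (conjc (phi w / ip w w) *: w) => x.
(* x - (phi x / phi w) w lies in the kernel, hence is orthogonal to w. *)
have phi_n : phi (x - (phi x / phi w) *: w) = 0.
  by rewrite phiB phiZ divfK // subrr.
have := orth _ phi_n; rewrite ipBl // ipZl // ipZr // conjcK => /eqP.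
by rewrite subr_eq0 => /eqP ->; field; apply/andP.
Qed.

End Riesz.

Lemma adjoint_exists (R : realType) (V : lmodType R[i]) (ip : V -> V -> R[i])
    (A : V -> V) :
  is_inner_product ip -> hcomplete ip -> bounded_op ip A ->
  exists B : V -> V, forall x y, ip (A x) y = ip x (B y).
Proof.
move=> ipP ip_complete A_bounded.
have [M M_ge0 A_le] := bounded_op_hnorm2 ipP A_bounded.
suff /choice[B hB] : forall y, exists h, forall x, ip (A x) y = ip x h.
  by exists B.
move=> y; apply: (riesz_representation ipP ip_complete (C := M * hnorm2 ip y)).
  by move=> a x x'; rewrite A_bounded.1 ip_linear.
move=> x; apply: le_trans (cauchy_schwarz ipP _ _) _.
by rewrite mulrAC ler_wpM2r ?hnorm2_ge0 ?A_le.
Qed.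

Section ComplexIntegral.
Variables (R : realType) (d : measure_display) (T : measurableType d).
Variable mu : {measure set T -> \bar R}.
Local Notation cint := (cint mu).
Local Notation integrableR f := (mu.-integrable setT (EFin \o f)).

Definition cmeasurable (g : T -> R[i]) :=
  measurable_fun setT (fun w => complex.Re (g w)) /\
  measurable_fun setT (fun w => complex.Im (g w)).

Definition cintegrable (g : T -> R[i]) :=
  integrableR (fun w => complex.Re (g w)) /\ integrableR (fun w => complex.Im (g w)).

Definition square_integrable (g : T -> R[i]) :=
  cmeasurable g /\ integrableR (fun w => cabs2 (g w)).

Lemma integrableRZ k f : integrableR f -> integrableR (fun w => k * f w).
Proof.
move=> f_int.
apply: (eq_integrable measurableT _ _ _ (integrableZl measurableT k f_int)) => w _ /=.
by rewrite EFinM.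
Qed.

Lemma integrableRD f g : integrableR f -> integrableR g -> integrableR (fun w => f w + g w).
Proof. exact: integrableD. Qed.

Lemma integrableRB f g : integrableR f -> integrableR g -> integrableR (fun w => f w - g w).
Proof. exact: integrableB. Qed.

Lemma cmeasurableB u v : cmeasurable u -> cmeasurable v -> cmeasurable (fun w => u w - v w).
Proof.
move=> [ur ui] [vr vi]; split.
  by under eq_fun do rewrite raddfB; exact: measurable_funB.
by under eq_fun do rewrite raddfB; exact: measurable_funB.
Qed.

Lemma cmeasurable_mulJ u v :
  cmeasurable u -> cmeasurable v -> cmeasurable (fun w => u w * conjc (v w)).
Proof.
move=> [ur ui] [vr vi]; split.
  by under eq_fun do rewrite Re_mulJ; apply: measurable_funD; exact: measurable_funM.
by under eq_fun do rewrite Im_mulJ; apply: measurable_funB; exact: measurable_funM.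
Qed.

Lemma measurable_cabs2 u : cmeasurable u -> measurable_fun setT (fun w => cabs2 (u w)).
Proof. by move=> [ur ui]; apply: measurable_funD; exact: measurable_funX. Qed.

Lemma square_integrable_lty u :
  cmeasurable u -> (\int[mu]_w (cabs2 (u w))%:E < +oo)%E -> square_integrable u.
Proof.
move=> mu_u fin_u; split => //; apply/integrableP; split.
  exact/measurable_EFinP/measurable_cabs2.
by under eq_integral => x _ do [rewrite /= ger0_norm; last exact: cabs2_ge0].
Qed.

Lemma square_integrableB u v :
  square_integrable u -> square_integrable v -> square_integrable (fun w => u w - v w).
Proof.
move=> [mu_u u_int] [mu_v v_int]; split; first exact: cmeasurableB.
apply: le_integrable (integrableRD (integrableRZ 2 u_int) (integrableRZ 2 v_int)) => //.
  exact/measurable_EFinP/measurable_cabs2/cmeasurableB.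
move=> w _ /=; rewrite !lee_fin !ger0_norm ?cabs2_ge0 ?cabs2B_le //.
by rewrite addr_ge0 // mulr_ge0 ?cabs2_ge0.
Qed.

Lemma cintegrable_mulJ u v :
  square_integrable u -> square_integrable v -> cintegrable (fun w => u w * conjc (v w)).
Proof.
move=> [mu_u u_int] [mu_v v_int]; have [mr mi] := cmeasurable_mulJ mu_u mu_v.
have dom := integrableRD u_int v_int.
split; apply: le_integrable dom => //; try exact/measurable_EFinP.
  move=> w _ /=; rewrite lee_fin [X in _ <= X]ger0_norm ?normr_Re_mulJ_le //.
  by rewrite addr_ge0 ?cabs2_ge0.
move=> w _ /=; rewrite lee_fin [X in _ <= X]ger0_norm ?normr_Im_mulJ_le //.
by rewrite addr_ge0 ?cabs2_ge0.
Qed.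

Lemma cint_linear a p q : cintegrable p -> cintegrable q ->
  cint (fun w => a * p w + q w) = a * cint p + cint q.
Proof.
case: a => a b [rp ip] [rq iq].
apply/eqP; rewrite eq_complex /=; apply/andP; split; apply/eqP.
  rewrite -!RintegralZl // -RintegralB ?integrableRZ //.
  rewrite -RintegralD ?integrableRB ?integrableRZ //.
  by apply: eq_Rintegral => w _; case: (p w) (q w) => ? ? [? ?].
rewrite -!RintegralZl // -RintegralD ?integrableRZ //.
rewrite -RintegralD ?integrableRD ?integrableRZ //.
by apply: eq_Rintegral => w _; case: (p w) (q w) => ? ? [? ?].
Qed.

Lemma eq_cint g1 g2 : g1 =1 g2 -> cint g1 = cint g2.
Proof. by move/funext->. Qed.

Lemma cintB p q : cintegrable p -> cintegrable q ->
  cint (fun w => p w - q w) = cint p - cint q.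
Proof.
move=> p_int q_int; rewrite addrC -mulN1r -cint_linear //.
by apply: eq_cint => w; rewrite mulN1r addrC.
Qed.

Lemma cint_real r : cint (fun w => (r w)%:C) = (\int[mu]_w r w)%:C.
Proof.
rewrite /Defs.cint /=; congr (Complex _ _).
by rewrite (@eq_Rintegral _ _ _ mu _ (fun=> 0)) // Rintegral_cst // mul0r.
Qed.

Lemma ae_eq_cint g1 g2 : cmeasurable g1 -> cmeasurable g2 ->
  {ae mu, forall w, g1 w = g2 w} -> cint g1 = cint g2.
Proof.
move=> [r1 i1] [r2 i2] g12; rewrite /Defs.cint; congr (Complex _ _); congr fine.
  by apply: ae_eq_integral => //; try exact/measurable_EFinP; apply: filterS g12 => w /= ->.
by apply: ae_eq_integral => //; try exact/measurable_EFinP; apply: filterS g12 => w /= ->.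
Qed.

Lemma cint_cabs2_eq0 u : square_integrable u ->
  cint (fun w => (cabs2 (u w))%:C) = 0 -> {ae mu, forall w, u w = 0}.
Proof.
move=> [mu_u u_int]; rewrite cint_real => /complexI int0.
have abs0 : (\int[mu]_w `|(EFin \o (fun w => cabs2 (u w))) w| = 0)%E.
  under eq_integral => w _ do [rewrite /= ger0_norm; last exact: cabs2_ge0].
  by rewrite -[LHS]fineK ?[fine _]int0 //; exact: integrable_fin_num.
have := (ae_eq_integral_abs mu measurableT (measurable_int mu u_int)).1 abs0.
by apply: filterS => w /(_ I) /= [] /cabs2_eq0.
Qed.

End ComplexIntegral.

Section Sesquilinear.
Variables (R : realType) (V : lmodType R[i]).

Definition sesquilinear (S : V -> V -> R[i]) :=
  (forall a x y z, S (a *: x + y) z = a * S x z + S y z) /\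
  (forall a x y z, S z (a *: x + y) = conjc a * S z x + S z y).

Lemma sesquilinear_polarization S x y : sesquilinear S ->
  4 * S x y = S (x + y) (x + y) - S (x - y) (x - y)
              + 'i * S (x + 'i *: y) (x + 'i *: y) - 'i * S (x - 'i *: y) (x - 'i *: y).
Proof.
move=> [linl linr].
have expand c : S (x + c *: y) (x + c *: y) =
    S x x + conjc c * S x y + c * S y x + c * conjc c * S y y.
  by rewrite addrC linl !linr; ring.
have -> : x + y = x + 1 *: y by rewrite scale1r.
have -> : x - y = x + (-1) *: y by rewrite scaleN1r.
have -> : x - 'i *: y = x + (- 'i) *: y by rewrite scaleNr.
rewrite !expand.
move: (S x x) (S x y) (S y x) (S y y) => [? ?] [? ?] [? ?] [? ?].
by apply/eqP; rewrite eq_complex /=; apply/andP; split; apply/eqP; ring.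
Qed.

Lemma sesquilinear_eq S1 S2 : sesquilinear S1 -> sesquilinear S2 ->
  (forall x, S1 x x = S2 x x) -> forall x y, S1 x y = S2 x y.
Proof.
move=> S1_sesq S2_sesq diag x y; apply: (@mulfI _ 4); first by rewrite pnatr_eq0.
by rewrite !sesquilinear_polarization // !diag.
Qed.

End Sesquilinear.

Lemma ip_comp_sesquilinear (R : realType) (V : lmodType R[i]) (ip : V -> V -> R[i])
    (A : V -> V) :
  is_inner_product ip -> (forall a x y, A (a *: x + y) = a *: A x + A y) ->
  sesquilinear (fun x y => ip (A x) (A y)).
Proof.
move=> ipP A_linear; split => a x y z; rewrite A_linear.
  exact: ip_linear.
by rewrite ipDr // ipZr.
Qed.

Section SquareIntegrableFamilies.
Variables (R : realType) (V : lmodType R[i]) (ip : V -> V -> R[i]).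
Hypothesis ipP : is_inner_product ip.
Variables (d : measure_display) (T : measurableType d) (mu : {measure set T -> \bar R}).
Local Notation TstarT_form := (TstarT_form ip mu).

Definition square_integrable_family (X : T -> V) :=
  forall f, square_integrable mu (fun w => ip f (X w)).

Lemma square_integrable_familyB X Y :
  square_integrable_family X -> square_integrable_family Y ->
  square_integrable_family (fun w => X w - Y w).
Proof.
move=> X_sq Y_sq f; rewrite (_ : (fun w => _) = fun w => ip f (X w) - ip f (Y w)).
  exact: square_integrableB.
by apply: funext => w; rewrite ipBr.
Qed.

Lemma cBessel_square_integrable X : cBessel ip mu X -> square_integrable_family X.
Proof.
move=> [X_meas [B [_ X_bounded]]] f; apply: square_integrable_lty; first exact: X_meas.
by apply: le_lt_trans (X_bounded f) _; exact: ltry.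
Qed.

Lemma parseval_square_integrable Kadj F :
  parseval_cKframe ip mu Kadj F -> square_integrable_family F.
Proof.
move=> [F_meas F_parseval] f; apply: square_integrable_lty; first exact: F_meas.
by rewrite F_parseval ltry.
Qed.

Lemma TstarT_form_sesquilinear A B :
  square_integrable_family A -> square_integrable_family B ->
  sesquilinear (TstarT_form A B).
Proof.
move=> A_sq B_sq; split => a x y z; rewrite /Defs.TstarT_form -cint_linear;
  try exact: cintegrable_mulJ.
  by apply: eq_cint => w; rewrite ip_linear // mulrDl mulrA.
by apply: eq_cint => w; rewrite ip_linear // rmorphD rmorphM /= mulrDr mulrCA.
Qed.

Lemma TstarT_formBl A1 A2 B f g :
  square_integrable_family A1 -> square_integrable_family A2 ->
  square_integrable_family B ->
  TstarT_form (fun w => A1 w - A2 w) B f g = TstarT_form A1 B f g - TstarT_form A2 B f g.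
Proof.
move=> A1_sq A2_sq B_sq; rewrite /Defs.TstarT_form -cintB; try exact: cintegrable_mulJ.
by apply: eq_cint => w; rewrite ipBr // rmorphB mulrBr.
Qed.

Lemma TstarT_formBr A B1 B2 f g :
  square_integrable_family A -> square_integrable_family B1 ->
  square_integrable_family B2 ->
  TstarT_form A (fun w => B1 w - B2 w) f g = TstarT_form A B1 f g - TstarT_form A B2 f g.
Proof.
move=> A_sq B1_sq B2_sq; rewrite /Defs.TstarT_form -cintB; try exact: cintegrable_mulJ.
by apply: eq_cint => w; rewrite ipBr // mulrBl.
Qed.

Lemma TstarT_form_diag X f :
  TstarT_form X X f f = cint mu (fun w => (cabs2 (ip f (X w)))%:C).
Proof. by apply: eq_cint => w; rewrite mulcJ. Qed.

Lemma parseval_TstarT_form Kadj F :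
  (forall a x y, Kadj (a *: x + y) = a *: Kadj x + Kadj y) ->
  parseval_cKframe ip mu Kadj F ->
  forall x y, TstarT_form F F x y = ip (Kadj x) (Kadj y).
Proof.
move=> Kadj_linear F_parseval.
have F_sq := parseval_square_integrable F_parseval.
apply: sesquilinear_eq; [exact: TstarT_form_sesquilinear | exact: ip_comp_sesquilinear |].
move=> x; rewrite TstarT_form_diag cint_real ip_self //.
by rewrite /Rintegral F_parseval.2 /= sqr_hnorm.
Qed.

End SquareIntegrableFamilies.

Section CanonicalDual.
Variables (R : realType) (V : lmodType R[i]) (ip : V -> V -> R[i]).
Variables (d : measure_display) (T : measurableType d) (mu : {measure set T -> \bar R}).
Variables (K Kadj Kdag Kdag_adj : V -> V) (F : T -> V).
Hypothesis ipP : is_inner_product ip.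
Hypothesis K_bounded : bounded_op ip K.
Hypothesis K_adj : is_adjoint ip K Kadj.
Hypothesis Kdag_MP : is_MP_inverse ip K Kdag.
Hypothesis F_parseval : parseval_cKframe ip mu Kadj F.
Hypothesis Kdag_adjP : forall x y, ip (Kdag x) y = ip x (Kdag_adj y).
Local Notation TstarT_form := (TstarT_form ip mu).
Local Notation dual := (dual_cKBessel ip mu K F).

Let ip_Kdag f x : ip f (Kdag x) = ip (Kdag_adj f) x.
Proof. by rewrite ip_sym // Kdag_adjP -ip_sym. Qed.

Lemma Kadj_Kdag_adj f : Kadj (Kdag_adj f) = Kdag (K f).
Proof.
apply: (ipr_inj ipP) => x; rewrite -K_adj.2 -Kdag_adjP.
by case: Kdag_MP => _ _ _ _ ->.
Qed.

Lemma canonical_dual_weakly_measurable : weakly_measurable ip (fun w => Kdag (F w)).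
Proof.
move=> f; have [Re_meas Im_meas] := F_parseval.1 (Kdag_adj f).
by split; under eq_fun do rewrite ip_Kdag.
Qed.

Lemma canonical_dual_Bessel : cBessel ip mu (fun w => Kdag (F w)).
Proof.
split; first exact: canonical_dual_weakly_measurable.
have [MK MK_ge0 K_le] := bounded_op_hnorm2 ipP K_bounded.
have [MD MD_ge0 Kdag_le] : exists2 M, 0 <= M & forall x, hnorm2 ip (Kdag x) <= M * hnorm2 ip x.
  by apply: bounded_op_hnorm2 => //; case: Kdag_MP.
exists (MD * MK + 1); split; first by rewrite ltr_wpDl ?mulr_ge0.
move=> f; under eq_integral do rewrite ip_Kdag.
rewrite F_parseval.2 Kadj_Kdag_adj lee_fin !sqr_hnorm //.
apply: le_trans (Kdag_le _) _; rewrite mulrDl mul1r ler_wpDr ?hnorm2_ge0 // -mulrA.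
by rewrite ler_wpM2l.
Qed.

Lemma canonical_dual_is_dual : dual (fun w => Kdag (F w)).
Proof.
split => [|f h]; first exact: canonical_dual_Bessel.
transitivity (TstarT_form F F (Kdag_adj f) h); last first.
  by apply: eq_cint => w; rewrite ip_Kdag -ip_sym.
rewrite (parseval_TstarT_form ipP K_adj.1.1 F_parseval).
by rewrite Kadj_Kdag_adj -K_adj.2; case: Kdag_MP => _ ->.
Qed.

Lemma TstarT_form_canonical A Q :
  weakly_measurable ip A -> {ae mu, forall w, A w = Kdag (F w)} -> dual Q ->
  forall f g, TstarT_form A Q f g = ip (Kdag (K f)) g.
Proof.
move=> A_meas A_canonical Q_dual f g.
have Q_meas := Q_dual.1.1.
rewrite /Defs.TstarT_form (ae_eq_cint (g2 := fun w => ip f (Q w) * conjc (ip g (Kdag (F w))))).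
- rewrite Kdag_adjP Q_dual.2; apply: eq_cint => w.
  by rewrite ip_Kdag -ip_sym.
- exact: cmeasurable_mulJ.
- exact/cmeasurable_mulJ/canonical_dual_weakly_measurable.
- by apply: filterS A_canonical => w ->.
Qed.

Lemma canonical_dual_of_TstarT G (D : nat -> V) :
  (forall x e, 0 < e -> exists n, hnorm ip (x - D n) < e) -> dual G ->
  (forall Q, dual Q -> forall f g, TstarT_form G G f g = TstarT_form G Q f g) ->
  {ae mu, forall w, G w = Kdag (F w)}.
Proof.
move=> denseD G_dual G_min.
pose A w := Kdag (F w).
have A_dual : dual A := canonical_dual_is_dual.
have G_sq := cBessel_square_integrable G_dual.1.
have A_sq := cBessel_square_integrable A_dual.1.
have A_meas := canonical_dual_weakly_measurable.
have A_form Q f g : dual Q -> TstarT_form A Q f g = ip (Kdag (K f)) g.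
  by move=> Q_dual; apply: TstarT_form_canonical => //; exact: aeW.
have GA_sq := square_integrable_familyB ipP G_sq A_sq.
have diff_form f : TstarT_form (fun w => G w - A w) (fun w => G w - A w) f f = 0.
  rewrite !TstarT_formBl // !TstarT_formBr // -G_min //.
  by rewrite !A_form // !subrr.
have orth f : {ae mu, forall w, ip f (G w - A w) = 0}.
  by apply: cint_cabs2_eq0 (GA_sq f) _; rewrite -TstarT_form_diag diff_form.
apply: filterS (ae_foralln (fun n => orth (D n))) => w orth_w.
by move/(orthogonal_dense_eq0 ipP denseD)/eqP: orth_w; rewrite subr_eq0 => /eqP.
Qed.

End CanonicalDual.

Theorem theorem3p6 (R : realType) (V : lmodType R[i]) (ip : V -> V -> R[i])
  (d : measure_display) (T : measurableType d) (mu : {measure set T -> \bar R})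
  (K Kadj Kdag : V -> V) (F G : T -> V) :
  is_hilbert ip -> hseparable ip ->
  bounded_op ip K -> closed_range ip K ->
  is_adjoint ip K Kadj -> is_MP_inverse ip K Kdag ->
  parseval_cKframe ip mu Kadj F ->
  dual_cKBessel ip mu K F G ->
  ({ae mu, forall w, G w = Kdag (F w)} <->
   (forall Q : T -> V, dual_cKBessel ip mu K F Q ->
      forall f g : V, TstarT_form ip mu G G f g = TstarT_form ip mu G Q f g)).
Proof.
move=> [ipP ip_complete] [D denseD] K_bounded _ K_adj Kdag_MP F_parseval G_dual.
have [Kdag_adj Kdag_adjP] : exists B, forall x y, ip (Kdag x) y = ip x (B y).
  by apply: adjoint_exists => //; case: Kdag_MP.
split => [G_canonical Q Q_dual f g | G_min].
  have G_form := TstarT_form_canonical ipP F_parseval Kdag_adjP G_dual.1.1 G_canonical.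
  by rewrite (G_form _ _ G_dual) (G_form _ _ Q_dual).
exact: (canonical_dual_of_TstarT ipP K_bounded K_adj Kdag_MP F_parseval Kdag_adjP
  denseD G_dual G_min).
Qed.
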